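(* Let $M\ge 0$, $k\ge 1$, $m\ge 0$ be integers. For $l\ge 0$ let $\mathcal{P}_l(k,m)$ be the set of partitions $(\lambda_1,\dots,\lambda_l)$ into exactly $l$ parts with $\lambda_l\ge k$ and $\lambda_i-\lambda_{i+1}\ge m$ for $1\le i\le l-1$ ($\mathcal{P}_0(k,m)$ contains only the empty partition), and let $\mathcal{P}_{\le M}(k,m)=\bigcup_{l=0}^M\mathcal{P}_l(k,m)$. For a partition $\pi=(\lambda_1,\dots,\lambda_l)$ with $l\ge1$ parts define $\omega_{k,m}(\pi):=(\lambda_l+1-k)\prod_{i=1}^{l-1}(\lambda_i-\lambda_{i+1}+1-m)$, and let $\omega_{k,m}$ of the empty partition be $1$. Then \[\sum_{\pi\in\mathcal{P}_{\le M}(k,m)}\omega_{k,m}(\pi)\,q^{|\pi|}=\sum_{i=0}^{M}\frac{q^{m\binom{i}{2}+ki}}{(q;q)_i^2}.\]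
   Context: A partition is a finite weakly decreasing sequence of positive integers; $|\pi|$ is the sum of its parts. $(a;q)_L=\prod_{n=0}^{L-1}(1-aq^n)$. *)

From mathcomp Require Import all_boot all_order all_algebra.
Set Implicit Arguments. Unset Strict Implicit. Unset Printing Implicit Defensive.
Import Order.TTheory GRing.Theory Num.Theory.
Local Open Scope ring_scope.

Definition is_partition (s : seq nat) : bool :=
  sorted (fun a b => (b <= a)%N) s && all (fun x => (0 < x)%N) s.

Definition psize (s : seq nat) : nat := sumn s.

Definition in_P (k m : nat) (s : seq nat) : bool :=
  [&& is_partition s,
      sorted (fun a b => (b + m <= a)%N) s &
      match s with [::] => true | x :: t => (k <= last x t)%N end].

Definition omega (k m : nat) (s : seq nat) : nat :=
  match s with
  | [::] => 1%N
  | x :: t => ((last x t + 1 - k) *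
               \prod_(d <- pairmap (fun a b => a - b + 1 - m) x t) d)%N
  end.

(* Every partition of n with l <= M parts has all parts in [0,n], so it is
   enumerated exactly once as an l-tuple of elements of 'I_(n+1). *)
Definition lhs_coef (M k m n : nat) : nat :=
  \sum_(l < M.+1) \sum_(t : l.-tuple 'I_n.+1)
     (if in_P k m (map val t) && (psize (map val t) == n)
      then omega k m (map val t) else 0)%N.

Definition fps := nat -> rat.

Definition fps_of_poly (p : {poly rat}) : fps := fun n => p`_n.

Definition fps_mul (f g : fps) : fps :=
  fun n => \sum_(j < n.+1) f j * g (n - j)%N.

(* Multiplicative inverse of a power series with invertible constant term,
   by the standard recursion g_0 = f_0^{-1},
   g_N = - f_0^{-1} * sum_{j=1}^{N} f_j g_{N-j}.
   inv_list f N = [:: g_0; ...; g_N]. *)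
Fixpoint inv_list (f : fps) (N : nat) : seq rat :=
  match N with
  | 0%N => [:: (f 0%N)^-1]
  | N'.+1 => let s := inv_list f N' in
             rcons s (- (f 0%N)^-1 *
                      \sum_(j < N) f j.+1 * nth 0 s (N' - j)%N)
  end.

Definition fps_inv (f : fps) : fps := fun n => nth 0 (inv_list f n) n.

Definition qpoch (i : nat) : {poly rat} := \prod_(j < i) (1 - 'X^(j.+1)).

Definition rhs_coef (M k m n : nat) : rat :=
  \sum_(i < M.+1)
    fps_mul (fps_of_poly 'X^(m * 'C(i, 2) + k * i))
            (fps_mul (fps_inv (fps_of_poly (qpoch i)))
                     (fps_inv (fps_of_poly (qpoch i)))) n.

From mathcomp Require Import all_boot all_order all_algebra.
From mathcomp Require Import ring zify.
Set Implicit Arguments. Unset Strict Implicit. Unset Printing Implicit Defensive.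
Import Order.TTheory GRing.Theory Num.Theory.

(* Removing the smallest part x >= k of a partition in P_(l+1)(k,m) leaves a
   partition in P_l(x+m,m), and omega_(k,m) factors as (x+1-k) omega_(x+m,m).
   Hence the generating function G_l(k) of P_l(k,m) weighted by omega satisfies
   G_(l+1)(k) = sum_(x >= k) (x+1-k) q^x G_l(x+m), and induction on l gives
   (q;q)_l^2 G_l(k) = q^(m C(l,2) + k l), the inductive step being
   sum_(d >= 0) (d+1) Y^d = (1-Y)^-2 for Y = q^(l+1).  Every identity is checked
   modulo q^B, which keeps all series polynomial. *)

Fixpoint sum_seqs (B l : nat) (F : seq nat -> nat) : nat :=
  if l is l'.+1 then \sum_(x < B) sum_seqs B l' (fun s => F (nat_of_ord x :: s)) else F [::].

Lemma eq_sum_seqs B l F G : F =1 G -> sum_seqs B l F = sum_seqs B l G.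
Proof.
elim: l F G => [|l IHl] F G eqFG /=; first exact: eqFG.
by apply: eq_bigr => x _; apply: IHl => s; apply: eqFG.
Qed.

Lemma sum_tuples B l F :
  \sum_(t : l.-tuple 'I_B) F (map val t) = sum_seqs B l F.
Proof.
elim: l F => [|l IHl] F /=.
  rewrite (eq_bigr (fun _ => F [::])) => [|t _]; last by rewrite tuple0.
  by rewrite sum_nat_const card_tuple mul1n.
pose cons_t (p : 'I_B * l.-tuple 'I_B) := [tuple of p.1 :: p.2].
pose uncons_t (t : l.+1.-tuple 'I_B) := (thead t, [tuple of behead t]).
have cons_tK : cancel cons_t uncons_t by case=> x t; congr pair; apply: val_inj.
have uncons_tK : cancel uncons_t cons_t by move=> t; rewrite [RHS]tuple_eta.
rewrite (reindex cons_t); last by exists uncons_t => ? _.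
rewrite -(pair_bigA _ (fun x (t : l.-tuple 'I_B) => F (map val (cons_t (x, t))))).
apply: eq_bigr => x _.
exact: (IHl (fun s => F (nat_of_ord x :: s))).
Qed.

Lemma sum_seqs_rcons B l F :
  sum_seqs B l.+1 F = \sum_(x < B) sum_seqs B l (fun s => F (rcons s x)).
Proof.
elim: l F => [//|l IHl] F.
rewrite [LHS]/= (eq_bigr _ (fun y _ => IHl (fun s => F (nat_of_ord y :: s)))).
by rewrite exchange_big.
Qed.

Lemma sum_seqs_mull B l c F :
  sum_seqs B l (fun s => c * F s) = c * sum_seqs B l F.
Proof.
elim: l F => [//|l IHl] F /=; rewrite big_distrr.
by apply: eq_bigr => x _; apply: (IHl (fun s => F (nat_of_ord x :: s))).
Qed.

Lemma psize_rcons s x : psize (rcons s x) = (psize s + x)%N.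
Proof. by rewrite /psize -cats1 sumn_cat /= addn0. Qed.

Lemma in_P_rcons k m s x : (1 <= k)%N ->
  in_P k m (rcons s x) = (k <= x)%N && in_P (x + m) m s.
Proof.
move=> k_gt0; case: s => [|y t].
  rewrite /in_P /is_partition /= !andbT.
  by case: (leqP k x) => [le_kx|]; rewrite ?andbF // (leq_trans k_gt0 le_kx).
rewrite /in_P /is_partition /= rcons_path rcons_path all_rcons last_rcons.
case: (leqP k x) => [le_kx|]; last by rewrite !andbF.
have -> : (0 < x)%N by apply: leq_trans le_kx.
case: (leqP (x + m) (last y t)) => [le_xm_last|]; last by rewrite !andbF.
have -> : (x <= last y t)%N by apply: leq_trans (leq_addr m x) le_xm_last.
by rewrite !andbT /= andbA.
Qed.

Lemma omega_rcons k m s x : in_P (x + m) m s ->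
  omega k m (rcons s x) = ((x + 1 - k) * omega (x + m) m s)%N.
Proof.
case: s => [_|y t /and3P[_ _ le_xm_last]] /=; first by rewrite big_nil.
rewrite last_rcons -cats1 pairmap_cat big_cat big_seq1 /= [(\prod_(_ <- _) _ * _)%N]mulnC.
by congr (_ * (_ * _))%N; lia.
Qed.

Definition weight (k m j : nat) (s : seq nat) : nat :=
  if in_P k m s && (psize s == j) then omega k m s else 0.

(* For x < k the truncated difference x + 1 - k vanishes, which enforces k <= x. *)
Lemma weight_rcons k m j s x : (1 <= k)%N ->
  weight k m j (rcons s x) =
  ((if (x <= j)%N then x + 1 - k else 0) * weight (x + m) m (j - x) s)%N.
Proof.
move=> k_gt0; rewrite /weight in_P_rcons // psize_rcons.
case: (leqP k x) => /= [le_kx|lt_xk]; last first.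
  have -> : (x + 1 - k = 0)%N by lia.
  by rewrite if_same.
case: (leqP x j) => /= [le_xj|lt_jx].
  have -> : (psize s + x == j) = (psize s == j - x) by apply/eqP/eqP; lia.
  by case: ifP => [/andP[/omega_rcons] | _]; rewrite ?muln0.
by rewrite mul0n; case: ifP => // /andP[_ /eqP]; lia.
Qed.

Local Open Scope ring_scope.

Section Truncation.
Variables (R : nzRingType) (n : nat).
Implicit Types p q : {poly R}.

Lemma take_polyMl p q : take_poly n (take_poly n p * q) = take_poly n (p * q).
Proof.
apply/polyP => i; rewrite !coef_take_poly; case: ifP => // lt_in.
rewrite !coefM; apply: eq_bigr => j _.
by rewrite coef_take_poly (leq_ltn_trans (leq_ord j) lt_in).
Qed.

Lemma take_polyMr p q : take_poly n (p * take_poly n q) = take_poly n (p * q).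
Proof.
apply/polyP => i; rewrite !coef_take_poly; case: ifP => // lt_in.
rewrite !coefM; apply: eq_bigr => j _.
by rewrite coef_take_poly (leq_ltn_trans (leq_subr j i) lt_in).
Qed.

Lemma take_polyMn p c : take_poly n (p *+ c) = take_poly n p *+ c.
Proof. exact: raddfMn. Qed.

Lemma take_polyXnM_0 a p : (n <= a)%N -> take_poly n ('X^a * p) = 0.
Proof.
move=> le_na; rewrite -commr_polyXn take_polyMXn.
by move/eqP: le_na => ->; rewrite take_poly0l mul0r.
Qed.

End Truncation.

Lemma take_poly_cancel (R : comNzRingType) n (p r g h : {poly R}) :
  take_poly n (p * r) = take_poly n 1 -> take_poly n (p * g) = take_poly n h ->
  take_poly n g = take_poly n (r * h).
Proof.
move=> pr1 pgh.
rewrite -[g]mul1r -take_polyMl -pr1 take_polyMl mulrAC mulrC.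
by rewrite -take_polyMr pgh take_polyMr.
Qed.

Lemma sum_geom_succ (R : comNzRingType) (Y : R) D :
  (1 - Y) ^+ 2 * \sum_(d < D) Y ^+ d *+ d.+1 = 1 - Y ^+ D * (D.+1%:R - D%:R * Y).
Proof.
elim: D => [|D IHD]; first by rewrite big_ord0 mulr0 expr0 mul1r mul0r subr0 subrr.
rewrite big_ord_recr /= mulrDr IHD -[Y ^+ D *+ _]mulr_natr [Y ^+ D.+1]exprSr.
rewrite -[D.+2]addn1 -[D.+1]addn1 !natrD.
move: (Y ^+ D) (D%:R : R) => Z d; ring.
Qed.

Lemma sum_monomials_shift (R : comNzRingType) B k m l :
  \sum_(x < B) ('X^x * 'X^(m * 'C(l, 2) + (x + m) * l)) *+ (x + 1 - k) =
  'X^(m * 'C(l.+1, 2) + k * l.+1) * \sum_(d < B - k) 'X^(l.+1) ^+ d *+ d.+1 :> {poly R}.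
Proof.
pose F x : {poly R} := 'X^x * 'X^(m * 'C(l, 2) + (x + m) * l) *+ (x + 1 - k).
have F0 x : (x < k)%N -> F x = 0.
  by move=> lt_xk; rewrite /F (_ : x + 1 - k = 0)%N ?mulr0n //; lia.
rewrite -(big_mkord xpredT F); case: (leqP k B) => [le_kB|lt_Bk]; last first.
  rewrite (_ : B - k = 0)%N ?big_ord0 ?mulr0; last by lia.
  by rewrite big_nat big1 // => x /andP[_ lt_xB]; rewrite F0 // (ltn_trans lt_xB lt_Bk).
rewrite (@big_cat_nat _ _ _ k 0 B) // /= big_nat big1 ?add0r; last first.
  by move=> x /andP[_ /F0].
rewrite -{1}[k]add0n big_addn big_mkord mulr_sumr; apply: eq_bigr => d _.
rewrite /F (_ : d + k + 1 - k = d.+1)%N; last by lia.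
rewrite -exprM !mulrnAr -!exprD; congr ('X^_ *+ _).
by rewrite binS bin1; ring.
Qed.

Lemma qpochS l : qpoch l.+1 = qpoch l * (1 - 'X^(l.+1)).
Proof. by rewrite /qpoch big_ord_recr. Qed.

Section GeneratingPolynomial.
Variables B m : nat.

Definition wcount (l k j : nat) : nat := sum_seqs B l (weight k m j).

(* Parts are bounded by B, which only loses partitions of size >= B. *)
Definition wgen (l k : nat) : {poly rat} := \poly_(j < B) (wcount l k j)%:R.

Lemma wcount_succ l k j : (1 <= k)%N ->
  wcount l.+1 k j =
  (\sum_(x < B) (if (x <= j)%N then x + 1 - k else 0) * wcount l (x + m) (j - x))%N.
Proof.
move=> k_gt0; rewrite /wcount sum_seqs_rcons; apply: eq_bigr => x _.
by rewrite (eq_sum_seqs _ _ (fun s => weight_rcons m j s x k_gt0)) sum_seqs_mull.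
Qed.

Lemma wgen_succ l k : (1 <= k)%N ->
  wgen l.+1 k = take_poly B
    (\sum_(x < B) ('X^x * wgen l (x + m)) *+ (x + 1 - k)).
Proof.
move=> k_gt0; apply/polyP => j; rewrite coef_poly coef_take_poly; case: ifP => // lt_jB.
rewrite wcount_succ // natr_sum coef_sum; apply: eq_bigr => x _.
rewrite coefMn coefXnM coef_poly; case: (leqP x j) => [le_xj|]; last by rewrite mul0rn.
by rewrite (leq_ltn_trans (leq_subr x j) lt_jB) natrM mulr_natl.
Qed.

Lemma take_poly_qpoch2_wgen l k : (1 <= k)%N ->
  take_poly B (qpoch l ^+ 2 * wgen l k) = take_poly B 'X^(m * 'C(l, 2) + k * l).
Proof.
elim: l k => [|l IHl] k k_gt0.
  apply/polyP => j; rewrite /qpoch big_ord0 expr1n mul1r !coef_take_poly coef_poly coefXn.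
  by case: (j < B)%N; rewrite //= /wcount /weight /= bin0n !muln0 eq_sym; case: (j == 0%N).
have take_sum : take_poly B (qpoch l ^+ 2 *
      \sum_(x < B) ('X^x * wgen l (x + m)) *+ (x + 1 - k)) =
    take_poly B (\sum_(x < B) ('X^x * 'X^(m * 'C(l, 2) + (x + m) * l)) *+ (x + 1 - k)).
  rewrite mulr_sumr !take_poly_sum; apply: eq_bigr => x _.
  rewrite mulrnAr !take_polyMn; case: (leqP k x) => [le_kx|lt_xk]; last first.
    by have -> : (x + 1 - k = 0)%N by lia.
  by rewrite mulrCA -take_polyMr IHl ?take_polyMr //; lia.
rewrite wgen_succ // take_polyMr qpochS exprMn [_ ^+ 2 * _ ^+ 2]mulrC -mulrA.
rewrite -take_polyMr take_sum take_polyMr sum_monomials_shift mulrCA sum_geom_succ.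
rewrite -exprM mulrBr mulr1 mulrA -exprD -mulrN take_polyD take_polyXnM_0 ?addr0 //.
have : (k * l.+1 <= m * 'C(l.+1, 2) + k * l.+1)%N by rewrite leq_addl.
nia.
Qed.

End GeneratingPolynomial.

Lemma size_inv_list f N : size (inv_list f N) = N.+1.
Proof. by elim: N => [|N IHN] //=; rewrite size_rcons IHN. Qed.

Lemma nth_inv_list f N j : (j <= N)%N -> nth 0 (inv_list f N) j = fps_inv f j.
Proof.
elim: N => [|N IHN]; first by rewrite leqn0 => /eqP->.
rewrite leq_eqVlt => /orP[/eqP-> //|lt_jN].
by rewrite /= nth_rcons size_inv_list lt_jN IHN.
Qed.

Lemma fps_invS f N :
  fps_inv f N.+1 = - (f 0%N)^-1 * \sum_(j < N.+1) f j.+1 * fps_inv f (N - j)%N.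
Proof.
rewrite {1}/fps_inv /= nth_rcons size_inv_list ltnn eqxx.
by congr (_ * _); apply: eq_bigr => j _; rewrite nth_inv_list // leq_subr.
Qed.

Definition trunc_inv (B : nat) (p : {poly rat}) : {poly rat} :=
  \poly_(j < B) fps_inv (fps_of_poly p) j.

Lemma coef_trunc_inv B p j : (j < B)%N -> (trunc_inv B p)`_j = fps_inv (fps_of_poly p) j.
Proof. by rewrite coef_poly => ->. Qed.

Lemma take_poly_mul_trunc_inv B (p : {poly rat}) : p`_0 != 0 ->
  take_poly B (p * trunc_inv B p) = take_poly B 1.
Proof.
move=> p0_neq0; apply/polyP => j; rewrite !coef_take_poly; case: ifP => // lt_jB.
rewrite coefM coef1 big_ord_recl /= subn0 coef_poly lt_jB.
case: j lt_jB => [|N] lt_NB.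
  by rewrite big_ord0 addr0 /fps_inv /fps_of_poly /= mulfV.
rewrite fps_invS /fps_of_poly mulrA mulrN mulfV // mulN1r.
rewrite [X in _ + X](eq_bigr (fun i : 'I_N.+1 => p`_i.+1 * fps_inv (fps_of_poly p) (N - i)%N)).
  by rewrite addNr.
move=> i _; rewrite coef_poly subSS.
by rewrite (leq_ltn_trans (leq_subr i N) (ltnW lt_NB)).
Qed.

Lemma fps_mul_poly f g (p q : {poly rat}) n :
  (forall i, (i <= n)%N -> f i = p`_i) -> (forall i, (i <= n)%N -> g i = q`_i) ->
  fps_mul f g n = (p * q)`_n.
Proof.
move=> eq_fp eq_gq; rewrite /fps_mul coefM; apply: eq_bigr => i _.
by rewrite eq_fp ?eq_gq ?leq_subr // -ltnS.
Qed.

Lemma coef0_qpoch i : (qpoch i)`_0 = 1.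
Proof.
rewrite -horner_coef0 /qpoch horner_prod big1 // => j _.
by rewrite !hornerE expr0n subr0.
Qed.

Theorem corollary6 (M k m : nat) : (1 <= k)%N ->
  forall n : nat, (lhs_coef M k m n)%:R = rhs_coef M k m n :> rat.
Proof.
move=> k_gt0 n; rewrite /lhs_coef /rhs_coef natr_sum; apply: eq_bigr => i _.
set e := (m * 'C(i, 2) + k * i)%N; set I := trunc_inv n.+1 (qpoch i).
have qpoch_I : take_poly n.+1 (qpoch i * I) = take_poly n.+1 1.
  by apply: take_poly_mul_trunc_inv; rewrite coef0_qpoch oner_neq0.
have : take_poly n.+1 (qpoch i * (qpoch i * wgen n.+1 m i k)) = take_poly n.+1 'X^e.
  by rewrite mulrA -expr2; apply: take_poly_qpoch2_wgen.
move/(take_poly_cancel qpoch_I)/(take_poly_cancel qpoch_I)/(congr1 (coefp n)) => /=.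
rewrite !coef_take_poly ltnSn coef_poly ltnSn (sum_tuples n.+1 i (weight k m n)) => ->.
rewrite mulrA mulrC; apply/esym/fps_mul_poly => // j le_jn.
by apply: fps_mul_poly => t le_tj; rewrite coef_trunc_inv // ltnS (leq_trans le_tj le_jn).
Qed.
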